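(* Let $0\le E^C_1\le E^C_2\le\cdots$ be a non-decreasing sequence of nonnegative reals with $\lim_{n\to\infty}E^C_n=\infty$, let $\beta>0$, $\gamma=e^{-\beta}\in(0,1)$, and let $E\ge E^C_1$. Let $$\varepsilon_C=\inf\Big\{\sum_{j=1}^\infty\omega_je^{-\beta E^C_j}\ :\ \omega_j\ge0\ \forall j,\ \sum_{j=1}^\infty\omega_j=1,\ \sum_{j=1}^\infty E^C_j\omega_j\le E\Big\}.$$ For $0<W<1$ let $j(W)=\min\{j\ge1: E^C_{j+1}>E/(1-W)\}$. Then $$\varepsilon_C\ \ge\ \sup_{W\in(0,1)} W\,\gamma^{E^C_{j(W)}}>0.$$ *)

(* classical reals. Sequences are indexed from 1 as in the paper;
   the value at index 0 of any nat -> R sequence is ignored. *)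
From Stdlib Require Import Reals.
Open Scope R_scope.

Definition is_glb (S : R -> Prop) (m : R) : Prop :=
  (forall x, S x -> m <= x) /\ (forall m', (forall x, S x -> m' <= x) -> m' <= m).

Definition feasible_values (Ec : nat -> R) (beta E : R) (v : R) : Prop :=
  exists w : nat -> R,
    (forall j, (1 <= j)%nat -> 0 <= w j) /\
    infinite_sum (fun n => w (S n)) 1 /\
    (exists s, infinite_sum (fun n => Ec (S n) * w (S n)) s /\ s <= E) /\
    infinite_sum (fun n => w (S n) * exp (- beta * Ec (S n))) v.

Definition is_jW (Ec : nat -> R) (E W : R) (j : nat) : Prop :=
  (1 <= j)%nat /\ Ec (S j) > E / (1 - W) /\
  (forall k, (1 <= k)%nat -> Ec (S k) > E / (1 - W) -> (j <= k)%nat).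

Definition lower_values (Ec : nat -> R) (beta E : R) (y : R) : Prop :=
  exists W j, 0 < W < 1 /\ is_jW Ec E W j /\
    y = W * Rpower (exp (- beta)) (Ec j).

(* Put c = E_{j+1} and g = e^{-beta E_j}, where j = j(W).  For every level n,
   e^{-beta E_n} >= g (1 - E_n / c): below j the exponential is at least g, above
   j the right-hand side is nonpositive.  Averaging against feasible weights w gives
   sum w_n e^{-beta E_n} >= g (1 - (sum E_n w_n) / c) >= g (1 - E / c) > g W,
   since E / c < 1 - W by the choice of j.  Hence every W gamma^{E_{j(W)}} is a
   lower bound of the feasible values, and so is their supremum, which is positive
   because j(1/2) exists when E_n -> +oo. *)
From Stdlib Require Import Reals Lra Lia Classical Wf_nat.
Open Scope R_scope.

Lemma exp_le_compat (x y : R) : x <= y -> exp x <= exp y.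
Proof. intros [Hlt | ->]; [left; apply exp_increasing | right]; auto. Qed.

Lemma Rpower_exp_l (a x : R) : Rpower (exp a) x = exp (a * x).
Proof. unfold Rpower. rewrite ln_exp. f_equal; ring. Qed.

Lemma Un_cv_const (c : R) : Un_cv (fun _ => c) c.
Proof.
  intros eps Heps. exists 0%nat. intros n _.
  unfold R_dist. rewrite Rminus_diag, Rabs_R0. exact Heps.
Qed.

Lemma infinite_sum_lincomb (a b : nat -> R) (A B k l : R) :
  infinite_sum a A -> infinite_sum b B ->
  infinite_sum (fun n => k * a n + l * b n) (k * A + l * B).
Proof.
  intros Ha Hb.
  assert (Hpartial : forall N, k * sum_f_R0 a N + l * sum_f_R0 b N
                              = sum_f_R0 (fun n => k * a n + l * b n) N).
  { intro N. rewrite plus_sum, !scal_sum.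
    f_equal; apply sum_eq; intros; ring. }
  apply (Un_cv_ext _ _ Hpartial).
  apply CV_plus; apply CV_mult; auto using Un_cv_const.
Qed.

Lemma infinite_sum_le (a b : nat -> R) (A B : R) :
  (forall n, a n <= b n) -> infinite_sum a A -> infinite_sum b B -> A <= B.
Proof.
  intros Hab Ha Hb.
  exact (Rle_cv_lim (fun N => sum_Rle a b N (fun n _ => Hab n)) Ha Hb).
Qed.

Section LowerBound.

Variables (Ec : nat -> R) (beta E : R).
Hypothesis Hnonneg : forall n, (1 <= n)%nat -> 0 <= Ec n.
Hypothesis Hmono : forall n, (1 <= n)%nat -> Ec n <= Ec (S n).
Hypothesis Hbeta : 0 < beta.
Hypothesis HE : Ec 1%nat <= E.

Lemma Ec_le (k m : nat) : (1 <= k)%nat -> (k <= m)%nat -> Ec k <= Ec m.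
Proof.
  intros Hk Hkm. induction Hkm as [| m Hkm IH]; [lra |].
  apply (Rle_trans _ _ _ IH), Hmono. lia.
Qed.

Lemma exp_energy_minorant (j n : nat) (c : R) :
  0 < c -> (forall k, (j < k)%nat -> c <= Ec k) -> (1 <= n)%nat ->
  exp (- beta * Ec j) * (1 - Ec n / c) <= exp (- beta * Ec n).
Proof.
  intros Hc Hcj Hn.
  pose proof (exp_pos (- beta * Ec j)) as Hg.
  destruct (Compare_dec.le_lt_dec n j) as [Hnj | Hjn].
  - assert (HEn : 0 <= Ec n / c) by (apply Rle_mult_inv_pos; auto).
    assert (Hexp : exp (- beta * Ec j) <= exp (- beta * Ec n)).
    { apply exp_le_compat. pose proof (Ec_le n j Hn Hnj). nra. }
    nra.
  - assert (HEn : 1 <= Ec n / c).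
    { apply Hcj in Hjn. apply (Rmult_le_reg_r c); [exact Hc |].
      unfold Rdiv. rewrite Rmult_assoc, Rinv_l; lra. }
    pose proof (exp_pos (- beta * Ec n)). nra.
Qed.

Lemma feasible_value_ge (W v : R) (j : nat) :
  0 < W < 1 -> is_jW Ec E W j -> feasible_values Ec beta E v ->
  W * exp (- beta * Ec j) <= v.
Proof.
  intros HW [_ [Hjc _]] [w [Hw [Hw1 [[s [Hs HsE]] Hv]]]].
  set (c := Ec (S j)) in *.
  set (g := exp (- beta * Ec j)).
  assert (Hg : 0 < g) by apply exp_pos.
  assert (HE0 : 0 <= E) by (pose proof (Hnonneg 1%nat (le_n 1)); lra).
  assert (HcE : E < (1 - W) * c).
  { apply (Rmult_lt_compat_l (1 - W)) in Hjc; [| lra].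
    unfold Rdiv in Hjc. rewrite (Rmult_comm E), <- Rmult_assoc, Rinv_r in Hjc; lra. }
  assert (Hc : 0 < c) by nra.
  assert (HsW : s / c < 1 - W).
  { apply (Rmult_lt_reg_r c); [exact Hc |].
    unfold Rdiv. rewrite Rmult_assoc, Rinv_l; lra. }
  assert (Hterm : forall n,
      g * w (S n) + - (g / c) * (Ec (S n) * w (S n))
      <= w (S n) * exp (- beta * Ec (S n))).
  { intro n.
    pose proof (Hw (S n) ltac:(lia)) as Hwn.
    pose proof (exp_energy_minorant j (S n) c Hc
                  (fun k Hk => Ec_le (S j) k ltac:(lia) Hk) ltac:(lia)) as Hmin.
    fold g in Hmin. unfold Rdiv in Hmin |- *. nra. }
  pose proof (infinite_sum_lincomb _ _ _ _ g (- (g / c)) Hw1 Hs) as Hlin.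
  pose proof (infinite_sum_le _ _ _ _ Hterm Hlin Hv) as Hv_ge.
  assert (g * W <= g * (1 - s / c)) by (apply Rmult_le_compat_l; lra).
  unfold Rdiv in *. nra.
Qed.

Lemma lower_value_le_feasible (y v : R) :
  lower_values Ec beta E y -> feasible_values Ec beta E v -> y <= v.
Proof.
  intros [W [j [HW [Hj ->]]]] Hv.
  rewrite Rpower_exp_l. exact (feasible_value_ge W v j HW Hj Hv).
Qed.

Lemma lower_value_pos (y : R) : lower_values Ec beta E y -> 0 < y.
Proof.
  intros [W [j [HW [_ ->]]]].
  apply Rmult_lt_0_compat; [lra | apply exp_pos].
Qed.

Lemma lower_value_le_1 (y : R) : lower_values Ec beta E y -> y <= 1.
Proof.
  intros [W [j [HW [[Hj1 _] ->]]]].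
  rewrite Rpower_exp_l.
  assert (exp (- beta * Ec j) <= 1).
  { rewrite <- exp_0. apply exp_le_compat. pose proof (Hnonneg j Hj1). nra. }
  pose proof (exp_pos (- beta * Ec j)). nra.
Qed.

End LowerBound.

Lemma is_jW_exists (Ec : nat -> R) (E W : R) :
  cv_infty Ec -> exists j, is_jW Ec E W j.
Proof.
  intro Hlim.
  destruct (Hlim (E / (1 - W))) as [N HN].
  assert (Hex : exists k, (1 <= k)%nat /\ Ec (S k) > E / (1 - W)).
  { exists (S N). split; [lia | apply HN; lia]. }
  destruct (dec_inh_nat_subset_has_unique_least_element _
              (fun n => classic _) Hex) as [j [[[Hj1 Hjc] Hjmin] _]].
  exists j. repeat split; auto.
Qed.

Theorem mainTheorem7 (Ec : nat -> R) (beta E : R)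
  (Hnonneg : forall n, (1 <= n)%nat -> 0 <= Ec n)
  (Hmono : forall n, (1 <= n)%nat -> Ec n <= Ec (S n))
  (Hlim : cv_infty Ec)
  (Hbeta : 0 < beta)
  (HE : Ec 1%nat <= E) :
  forall epsC, is_glb (feasible_values Ec beta E) epsC ->
  exists s, is_lub (lower_values Ec beta E) s /\ s <= epsC /\ 0 < s.
Proof.
  intros epsC [_ HepsC_greatest].
  destruct (is_jW_exists Ec E (/ 2) Hlim) as [j Hj].
  set (y := / 2 * Rpower (exp (- beta)) (Ec j)).
  assert (Hy : lower_values Ec beta E y) by (exists (/ 2), j; split; [lra | split; [exact Hj | reflexivity]]).
  assert (Hbound : bound (lower_values Ec beta E)).
  { exists 1. intros x Hx. exact (lower_value_le_1 Ec beta E Hnonneg Hbeta x Hx). }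
  destruct (completeness _ Hbound (ex_intro _ y Hy)) as [s Hs].
  exists s. split; [exact Hs | split].
  - apply (proj2 Hs). intros x Hx. apply HepsC_greatest. intros v Hv.
    exact (lower_value_le_feasible Ec beta E Hnonneg Hmono Hbeta HE x v Hx Hv).
  - apply (Rlt_le_trans _ y); [exact (lower_value_pos Ec beta E y Hy) |].
    exact (proj1 Hs y Hy).
Qed.
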